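(* Let $\mathcal{D}$ be a domain, $G$ a subgroup of $\mathrm{IET}(\mathcal{D})$, $(A,+)$ a finite abelian group, and $J\subset\mathcal{D}$ a subdomain. Let $\mathcal{F}=A^{\mathcal{D}}$ be the additive group of all functions $\mathcal{D}\to A$, on which $G$ acts by $g\cdot f=f\circ g^{-1}$. For $a\in A$ let $a\mathbb{1}_J\in\mathcal{F}$ be the function equal to $a$ on $J$ and $0$ elsewhere, and let $\mathcal{F}_J$ be the smallest $G$-invariant subgroup of $\mathcal{F}$ containing all $a\mathbb{1}_J$, $a\in A$. Then the semidirect product $\mathcal{F}_J\rtimes G$ embeds in $\mathrm{IET}$.
   Context: A domain is a non-empty disjoint union of finitely many oriented circles and oriented half-open bounded intervals closed on the left; a subdomain is a subset that is itself a domain. $\mathrm{IET}(\mathcal{D})$ is the group of bijections of $\mathcal{D}$ that are orientation-preserving piecewise isometries, left-continuous, with finitely many discontinuity points; $\mathrm{IET}=\mathrm{IET}([0,1))$. *)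

From Stdlib Require Import Reals List.
From mathcomp Require Import all_boot all_algebra.
Set Implicit Arguments. Unset Strict Implicit. Unset Printing Implicit Defensive.
Import GRing.Theory.
Local Open Scope R_scope.

(* A domain: a nonempty finite list of components; each component is
   (is_circle, length L) with L > 0. A point of component i has coordinate
   x in [0, L); for a circle, the coordinate is the arc-length position
   measured from a base point in the positive orientation. *)
Record domain := Domain {
  dcomps : seq (bool * R);
  dcomps_nonempty : dcomps <> [::];
  dcomps_pos : forall c, List.In c dcomps -> 0 < c.2 }.

Definition comp_len (D : domain) (i : nat) : R := (nth (false, R0) (dcomps D) i).2.

Definition in_dom (D : domain) (p : nat * R) : Prop :=
  (p.1 < size (dcomps D))%N /\ (0 <= p.2 < comp_len D p.1).

Definition point (D : domain) := {p : nat * R | in_dom D p}.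

Definition pcomp (D : domain) (p : point D) : nat := (proj1_sig p).1.
Definition pcoord (D : domain) (p : point D) : R := (proj1_sig p).2.

(* Orientation-preserving piecewise isometry, continuous on each piece
   [c, c') (closed on the left), with finitely many discontinuity points:
   there is a finite set of cut points such that on each component, between
   consecutive cuts, g maps into a single component and is a translation. *)
Definition piecewise_translation (D : domain) (g : point D -> point D) : Prop :=
  exists cuts : seq (nat * R),
    forall p q : point D, pcomp p = pcomp q -> (pcoord p <= pcoord q) ->
      (forall c, List.In c cuts -> c.1 = pcomp p ->
         ~ (pcoord p < c.2 <= pcoord q)) ->
      pcomp (g q) = pcomp (g p) /\
      (pcoord (g q) - pcoord (g p) = pcoord q - pcoord p).

Definition IET (D : domain) (g : point D -> point D) : Prop :=
  bijective g /\ piecewise_translation g.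

Definition ginv (D : domain) (g h : point D -> point D) : Prop :=
  (forall x, h (g x) = x) /\ (forall x, g (h x) = x).

Record is_subgroup_IET (D : domain) (G : (point D -> point D) -> Prop) : Prop := {
  sg_IET : forall g, G g -> IET g;
  sg_id : G id;
  sg_comp : forall g h, G g -> G h -> G (g \o h);
  sg_inv : forall g, G g -> exists h, G h /\ ginv g h }.

(* J is a subdomain of D: a nonempty finite union of half-open coordinate
   intervals [a, b) inside components (arcs of circles crossing the base
   point are unions of two such intervals; a whole circle is [0, L)). *)
Definition subdomain (D : domain) (J : point D -> bool) : Prop :=
  (exists p, J p) /\
  exists ivs : seq (nat * R * R),
    (forall iv, List.In iv ivs ->
       (iv.1.1 < size (dcomps D))%N /\ (0 <= iv.1.2 < iv.2) /\
       (iv.2 <= comp_len D iv.1.1)) /\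
    (forall p : point D, J p <->
       exists iv, List.In iv ivs /\ pcomp p = iv.1.1 /\
                  (iv.1.2 <= pcoord p < iv.2)).

Inductive FJ (D : domain) (G : (point D -> point D) -> Prop) (A : finZmodType)
    (J : point D -> bool) : (point D -> A) -> Prop :=
| FJ_gen (a : A) : FJ G J (fun p => if J p then a else (GRing.zero : A))
| FJ_zero : FJ G J (fun _ => (GRing.zero : A))
| FJ_add f1 f2 : FJ G J f1 -> FJ G J f2 -> FJ G J (fun p => GRing.add (f1 p) (f2 p))
| FJ_opp f : FJ G J f -> FJ G J (fun p => GRing.opp (f p))
| FJ_act f g h : FJ G J f -> G g -> G h -> ginv g h -> FJ G J (f \o h).

Lemma unit_nonempty : [:: (false, 1)] <> [::]. Proof. by []. Qed.
Lemma unit_pos : forall c, List.In c [:: (false, 1)] -> 0 < c.2.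
Proof. move=> c [<-|[]] /=; exact: Rlt_0_1. Qed.
Definition unit_interval : domain := Domain unit_nonempty unit_pos.

(* An element (f, g) of F_J ⋊ G acts faithfully on the finite cover D × A by the
   skew product (p, a) ↦ (g p, a + f (g p)), and this is a homomorphism.  Every
   f ∈ F_J is piecewise constant with finitely many cuts, since a 1_J is and G acts
   by piecewise translations; hence the skew product is an interval exchange of
   D × A, which is itself a domain (one copy of each component of D per element of
   A).  Laying these components side by side in [0, 1) and rescaling makes it an
   element of IET. *)

From Pilot Require Import Defs.
From Stdlib Require Import Reals List Lra.
From Stdlib Require Import ClassicalEpsilon FunctionalExtensionality ProofIrrelevance.
From mathcomp Require Import all_boot all_algebra.
From mathcomp Require Import zify.
(* Re-imported so that [pcomp] denotes [Defs.pcomp] rather than ssrfun's [pcomp]. *)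
Import Defs.
Set Implicit Arguments. Unset Strict Implicit. Unset Printing Implicit Defensive.
Import GRing.Theory.
Local Open Scope R_scope.

Section Pieces.

Variable D : domain.

Lemma point_eq (p q : point D) : proj1_sig p = proj1_sig q -> p = q.
Proof. by move: p q => [x Hx] [y Hy] /= E; subst y; rewrite (proof_irrelevance _ Hx Hy). Qed.

Lemma pointE (p : point D) : proj1_sig p = (pcomp p, pcoord p).
Proof. exact: surjective_pairing. Qed.

Lemma pcomp_lt (p : point D) : (pcomp p < size (dcomps D))%N.
Proof. exact: (proj2_sig p).1. Qed.

Lemma pcoord_range (p : point D) : 0 <= pcoord p < comp_len D (pcomp p).
Proof. exact: (proj2_sig p).2. Qed.

Definition no_cut (cuts : seq (nat * R)) (p q : point D) : Prop :=
  forall c, List.In c cuts -> c.1 = pcomp p -> ~ (pcoord p < c.2 <= pcoord q).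

Lemma no_cut_catl cuts cuts' p q : no_cut (cuts ++ cuts') p q -> no_cut cuts p q.
Proof. by move=> n c hc; apply: n; apply: in_or_app; left. Qed.

Lemma no_cut_catr cuts cuts' p q : no_cut (cuts ++ cuts') p q -> no_cut cuts' p q.
Proof. by move=> n c hc; apply: n; apply: in_or_app; right. Qed.

Lemma no_cut_le cuts p q q' : pcoord q' <= pcoord q -> no_cut cuts p q -> no_cut cuts p q'.
Proof. by move=> le n c hc hc1 [lo hi]; apply: (n c hc hc1); lra. Qed.

Definition constant_on_pieces (X : Type) (f : point D -> X) (cuts : seq (nat * R)) : Prop :=
  forall p q, pcomp p = pcomp q -> pcoord p <= pcoord q -> no_cut cuts p q -> f p = f q.

Definition piecewise_constant (X : Type) (f : point D -> X) : Prop :=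
  exists cuts, constant_on_pieces f cuts.

Definition translation_on_pieces (g : point D -> point D) (cuts : seq (nat * R)) : Prop :=
  forall p q, pcomp p = pcomp q -> pcoord p <= pcoord q -> no_cut cuts p q ->
    pcomp (g q) = pcomp (g p) /\ pcoord (g q) - pcoord (g p) = pcoord q - pcoord p.

Lemma piecewise_translationP g :
  piecewise_translation g -> exists cuts, translation_on_pieces g cuts.
Proof. by []. Qed.

Lemma piecewise_constant_const (X : Type) (x : X) : piecewise_constant (fun _ => x).
Proof. by exists nil. Qed.

Lemma piecewise_constant_map (X Y : Type) (h : X -> Y) (f : point D -> X) :
  piecewise_constant f -> piecewise_constant (h \o f).
Proof. by case=> cuts hf; exists cuts => p q e l n /=; rewrite (hf p q). Qed.

Lemma piecewise_constant_map2 (X Y Z : Type) (h : X -> Y -> Z) f1 f2 :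
  piecewise_constant f1 -> piecewise_constant f2 ->
  piecewise_constant (fun p => h (f1 p) (f2 p)).
Proof.
move=> [c1 h1] [c2 h2]; exists (c1 ++ c2) => p q e l n.
by rewrite (h1 p q e l (no_cut_catl n)) (h2 p q e l (no_cut_catr n)).
Qed.

Lemma subdomain_piecewise_constant (J : point D -> bool) :
  subdomain J -> piecewise_constant J.
Proof.
move=> [_ [ivs [_ HJ]]].
exists (flat_map (fun iv => [:: (iv.1.1, iv.1.2); (iv.1.1, iv.2)]) ivs) => p q e l n.
have n_end iv t : List.In iv ivs -> t = iv.1.2 \/ t = iv.2 ->
    iv.1.1 = pcomp p -> ~ (pcoord p < t <= pcoord q).
  move=> hiv ht hp; apply: (n (iv.1.1, t)) => //; apply/in_flat_map; exists iv.
  by split=> //; case: ht => ->; [left | right; left].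
case Jp: (J p); case Jq: (J q) => //.
- have [iv [hiv [hp [lo hi]]]] := (HJ p).1 Jp.
  have Jq' : J q.
    apply/(HJ q).2; exists iv; split=> //; split; first by rewrite -e.
    split; first lra.
    case: (Rlt_le_dec (pcoord q) iv.2) => // h.
    by case: (n_end iv iv.2 hiv (or_intror erefl) (esym hp)); lra.
  by rewrite Jq in Jq'.
- have [iv [hiv [hq [lo hi]]]] := (HJ q).1 Jq.
  have Jp' : J p.
    apply/(HJ p).2; exists iv; split=> //; split; first by rewrite e.
    split; last lra.
    case: (Rle_lt_dec iv.1.2 (pcoord p)) => // h.
    have hp : iv.1.1 = pcomp p by rewrite e.
    by case: (n_end iv iv.1.2 hiv (or_introl erefl) hp); lra.
  by rewrite Jp in Jp'.
Qed.

Lemma translation_piece_onto g cuts p q (c : nat * R) :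
  translation_on_pieces g cuts ->
  pcomp p = pcomp q -> pcoord p <= pcoord q -> no_cut cuts p q ->
  c.1 = pcomp (g p) -> pcoord (g p) < c.2 <= pcoord (g q) ->
  exists z, proj1_sig (g z) = c /\ pcomp z = pcomp p /\ pcoord p < pcoord z <= pcoord q.
Proof.
move=> Hg e l n hc1 [lo hi].
have [_ d] := Hg p q e l n.
have Hz : in_dom D (pcomp p, pcoord p + (c.2 - pcoord (g p))).
  split; first exact: pcomp_lt.
  by have := pcoord_range p; have := pcoord_range q; rewrite /= -e; lra.
pose z : point D := exist _ _ Hz.
have zE : pcoord z = pcoord p + (c.2 - pcoord (g p)) by [].
have lz : pcoord z <= pcoord q by rewrite zE; lra.
have [ez dz] := Hg p z erefl ltac:(rewrite zE; lra) (no_cut_le lz n).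
exists z; split; last by split=> //; rewrite zE; lra.
rewrite pointE ez -hc1 [c]surjective_pairing; congr pair; move: dz; rewrite zE; lra.
Qed.

(* [c] itself is a junk value: a pair that is not a point of [D] is never hit. *)
Definition preimage_cut (h : point D -> point D) (c : nat * R) : nat * R :=
  match excluded_middle_informative (in_dom D c) with
  | left Hc => proj1_sig (h (exist _ c Hc))
  | right _ => c
  end.

Lemma preimage_cutE g h z c :
  cancel g h -> proj1_sig (g z) = c -> preimage_cut h c = proj1_sig z.
Proof.
move=> gK gz; rewrite /preimage_cut; case: excluded_middle_informative => [Hc|]; last first.
  by case; rewrite -gz; exact: proj2_sig.
by rewrite (_ : exist _ c Hc = g z) ?gK //; apply: point_eq.
Qed.

Lemma piecewise_constant_comp (X : Type) (f : point D -> X) g h :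
  piecewise_constant f -> piecewise_translation g -> cancel g h ->
  piecewise_constant (f \o g).
Proof.
move=> [cf Hf] /piecewise_translationP [cg Hg] gK.
exists (cg ++ List.map (preimage_cut h) cf) => p q e l n.
have [e' d'] := Hg p q e l (no_cut_catl n).
apply: Hf; [by rewrite e' | lra | move=> c hc hc1 between].
have [z [gz [ez bz]]] := translation_piece_onto Hg e l (no_cut_catl n) hc1 between.
apply: (no_cut_catr n (c := proj1_sig z)) => //.
by rewrite -(preimage_cutE gK gz); apply: in_map.
Qed.

End Pieces.

Lemma FJ_piecewise_constant (D : domain) G (A : finZmodType) (J : point D -> bool)
    (f : point D -> A) :
  is_subgroup_IET G -> subdomain J -> FJ G J f -> piecewise_constant f.
Proof.
move=> HG HJ; elim=> [a | | f1 f2 _ h1 _ h2 | f1 _ h1 | f1 g h _ h1 _ Gh [_ hK]].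
- exact: (piecewise_constant_map (fun b : bool => if b then a else 0%R)
                                 (subdomain_piecewise_constant HJ)).
- exact: piecewise_constant_const.
- exact: piecewise_constant_map2.
- exact: (piecewise_constant_map (@GRing.opp A)).
- exact: (piecewise_constant_comp h1 (sg_IET HG Gh).2 hK).
Qed.

Section Transport.

Variables (X Y : Type) (E : X -> Y).
Hypothesis E_inj : injective E.

Definition transport (F : X -> X) (y : Y) : Y :=
  match excluded_middle_informative (exists x, E x = y) with
  | left H => E (F (proj1_sig (constructive_indefinite_description _ H)))
  | right _ => y
  end.

Lemma transportE F x : transport F (E x) = E (F x).
Proof.
rewrite /transport; case: excluded_middle_informative => [H | []]; last by exists x.
by case: constructive_indefinite_description => x' /= /E_inj ->.
Qed.

Lemma transport_out F y : ~ (exists x, E x = y) -> transport F y = y.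
Proof. by rewrite /transport; case: excluded_middle_informative. Qed.

Lemma transport_comp F1 F2 : transport (F1 \o F2) = transport F1 \o transport F2.
Proof.
apply: functional_extensionality => y /=.
case: (classic (exists x, E x = y)) => [[x <-] | Hy]; first by rewrite !transportE.
by rewrite !transport_out.
Qed.

Lemma transport_id : transport id = id.
Proof.
apply: functional_extensionality => y.
case: (classic (exists x, E x = y)) => [[x <-] | Hy]; first by rewrite transportE.
by rewrite transport_out.
Qed.

Lemma transport_inj : injective transport.
Proof.
move=> F1 F2 e; apply: functional_extensionality => x.
by apply: E_inj; rewrite -!transportE e.
Qed.

Lemma transport_bij F : bijective F -> bijective (transport F).
Proof.
case=> F' FK F'K; exists (transport F') => y.
- have FF' : F' \o F = id by apply: functional_extensionality.
  by rewrite -[transport F' _]/((transport F' \o transport F) y) -transport_comp FF' transport_id.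
- have F'F : F \o F' = id by apply: functional_extensionality.
  by rewrite -[transport F _]/((transport F \o transport F') y) -transport_comp F'F transport_id.
Qed.

End Transport.

Lemma unit_pcomp (u : point unit_interval) : pcomp u = 0%N.
Proof. by have := pcomp_lt u; case: (pcomp u). Qed.

Section Layout.

Variables (D : domain) (A : finZmodType).

Definition slot_width : R := fold_right (fun c w => Rmax c.2 w) 1 (dcomps D).

Lemma slot_width_ge1 : 1 <= slot_width.
Proof.
rewrite /slot_width; elim: (dcomps D) => [|c cs IH] /=; first lra.
exact: Rle_trans IH (Rmax_r _ _).
Qed.

Lemma comp_len_le_width i : (i < size (dcomps D))%N -> comp_len D i <= slot_width.
Proof.
rewrite /comp_len /slot_width; elim: (dcomps D) i => [|c cs IH] [|i] //= hi.
- exact: Rmax_l.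
- exact: Rle_trans (IH i hi) (Rmax_r _ _).
Qed.

Lemma pcoord_lt_width (p : point D) : 0 <= pcoord p < slot_width.
Proof. by have := pcoord_range p; have := comp_len_le_width (pcomp_lt p); lra. Qed.

Definition slot (i : nat) (a : A) : nat := (i * #|A| + enum_rank a)%N.

Definition nslots : nat := (size (dcomps D) * #|A|)%N.

Lemma enum_rank_lt (a : A) : (enum_rank a < #|A|)%N.
Proof. exact: ltn_ord. Qed.

Lemma slot_lt (p : point D) a : (slot (pcomp p) a < nslots)%N.
Proof. by have := pcomp_lt p; have := enum_rank_lt a; rewrite /slot /nslots; nia. Qed.

Lemma slot_inj i j a b : slot i a = slot j b -> i = j /\ a = b.
Proof.
rewrite /slot => e; have ra := enum_rank_lt a; have rb := enum_rank_lt b.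
have eij : i = j by nia.
have erk : nat_of_ord (enum_rank a) = enum_rank b by lia.
by split=> //; apply/enum_rank_inj/ord_inj.
Qed.

Definition offset (m : nat) : R := INR m * slot_width.

Lemma offset_ltn m m' : (m < m')%N -> offset m + slot_width <= offset m'.
Proof.
move=> /ltP /le_INR; rewrite S_INR /offset => h.
by have := slot_width_ge1; nra.
Qed.

Lemma offset_inj m m' x x' : 0 <= x < slot_width -> 0 <= x' < slot_width ->
  offset m + x = offset m' + x' -> m = m'.
Proof.
move=> hx hx' e; case: (ltngtP m m') => // /offset_ltn; lra.
Qed.

Definition total_length : R := offset nslots.

Lemma total_length_gt0 : 0 < total_length.
Proof.
have n_gt0 : (0 < nslots)%N.
  rewrite /nslots muln_gt0; apply/andP; split; last by apply/card_gt0P; exists 0%R.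
  by case: (dcomps D) (@dcomps_nonempty D).
have := offset_ltn n_gt0; rewrite /total_length /offset /= Rmult_0_l; have := slot_width_ge1; lra.
Qed.

(* [D × A] is laid out in [0, total_length): sheet [a] of component [i] occupies
   [offset (slot i a) + [0, comp_len D i)]. *)
Definition lift (pa : point D * A) : R := offset (slot (pcomp pa.1) pa.2) + pcoord pa.1.

Lemma lift_range pa :
  offset (slot (pcomp pa.1) pa.2) <= lift pa < offset (slot (pcomp pa.1) pa.2) + slot_width.
Proof. by have := pcoord_lt_width pa.1; rewrite /lift; lra. Qed.

Lemma lift_inj : injective lift.
Proof.
move=> [p a] [q b]; rewrite /lift /= => e.
have /slot_inj [epq eab] := offset_inj (pcoord_lt_width p) (pcoord_lt_width q) e.
have xpq : pcoord p = pcoord q by move: e; rewrite epq eab; lra.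
by rewrite eab (_ : p = q) //; apply: point_eq; rewrite !pointE epq xpq.
Qed.

Lemma lift_sub (p q : point D) a :
  pcomp q = pcomp p -> lift (q, a) - lift (p, a) = pcoord q - pcoord p.
Proof. by rewrite /lift /= => ->; ring. Qed.

Lemma lift_lt_total pa : 0 <= lift pa < total_length.
Proof.
have [lo hi] := lift_range pa; have := offset_ltn (slot_lt pa.1 pa.2).
have := pos_INR (slot (pcomp pa.1) pa.2); have := slot_width_ge1.
rewrite /total_length /offset in lo hi *; nra.
Qed.

Lemma div_total_le x y : x <= y -> x / total_length <= y / total_length.
Proof.
by move=> h; apply: Rmult_le_compat_r => //; apply/Rlt_le/Rinv_0_lt_compat/total_length_gt0.
Qed.

Lemma div_total_lt x y : x < y -> x / total_length < y / total_length.
Proof. by move=> h; apply: Rmult_lt_compat_r => //; apply/Rinv_0_lt_compat/total_length_gt0. Qed.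

Lemma lift_div_total_range pa : 0 <= lift pa / total_length < 1.
Proof.
have [lo hi] := lift_lt_total pa; split.
- by rewrite -(Rdiv_0_l total_length); apply: div_total_le.
- by rewrite -(Rdiv_diag total_length); [apply: div_total_lt | have := total_length_gt0; lra].
Qed.

Definition embed (pa : point D * A) : point unit_interval :=
  exist _ (0%N, lift pa / total_length) (conj erefl (lift_div_total_range pa)).

Lemma embed_inj : injective embed.
Proof.
move=> pa pb /(f_equal (@pcoord _)) /= /Rdiv_eq_reg_r e; apply: lift_inj.
by apply: e; have := total_length_gt0; lra.
Qed.

Definition stretch (u : point unit_interval) : R := pcoord u * total_length.

Lemma pcoord_stretch u : pcoord u = stretch u / total_length.
Proof. by rewrite /stretch; field; have := total_length_gt0; lra. Qed.

Lemma pcoord_embed pa : pcoord (embed pa) = lift pa / total_length.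
Proof. by []. Qed.

Lemma stretch_embed pa : stretch (embed pa) = lift pa.
Proof. by rewrite /stretch pcoord_embed; field; have := total_length_gt0; lra. Qed.

Lemma stretch_le u v : pcoord u <= pcoord v -> stretch u <= stretch v.
Proof. by move=> h; apply: Rmult_le_compat_r => //; have := total_length_gt0; lra. Qed.

Lemma embed_onto_sheet i a u :
  (i < size (dcomps D))%N ->
  offset (slot i a) <= stretch u < offset (slot i a) + comp_len D i ->
  exists p, embed (p, a) = u /\ pcomp p = i /\ pcoord p = stretch u - offset (slot i a).
Proof.
move=> hi hu.
have Hp : in_dom D (i, stretch u - offset (slot i a)) by split=> //=; lra.
exists (exist _ _ Hp); split=> //; apply: point_eq.
rewrite [RHS]pointE unit_pcomp (pcoord_stretch u); congr pair.
by rewrite /lift /pcomp /pcoord /=; congr Rdiv; ring.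
Qed.

Definition sheetwise_translation (F : point D * A -> point D * A) : Prop :=
  exists cuts, forall p q, pcomp p = pcomp q -> pcoord p <= pcoord q -> no_cut cuts p q ->
    forall a, (F (q, a)).2 = (F (p, a)).2 /\ pcomp (F (q, a)).1 = pcomp (F (p, a)).1 /\
              pcoord (F (q, a)).1 - pcoord (F (p, a)).1 = pcoord q - pcoord p.

Lemma embed_sheet_right p a v :
  lift (p, a) <= stretch v -> stretch v < offset (slot (pcomp p) a) + comp_len D (pcomp p) ->
  exists q, embed (q, a) = v /\ pcomp q = pcomp p /\ pcoord q - pcoord p = stretch v - lift (p, a).
Proof.
move=> lo hi; have [lo' _] := lift_range (p, a).
have [q [vq [cq xq]]] := embed_onto_sheet (a := a) (pcomp_lt p) (conj (Rle_trans _ _ _ lo' lo) hi).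
by exists q; split=> //; split=> //; rewrite xq /lift /=; ring.
Qed.

Lemma embed_sheet_left q a u :
  offset (slot (pcomp q) a) <= stretch u <= lift (q, a) -> exists p, embed (p, a) = u.
Proof.
move=> [lo hi]; have rq := pcoord_range q.
have hi' : stretch u < offset (slot (pcomp q) a) + comp_len D (pcomp q).
  by rewrite /lift /= in hi; lra.
by have [p [up _]] := embed_onto_sheet (pcomp_lt q) (conj lo hi'); exists p.
Qed.

Definition unit_cuts (S : seq R) : seq (nat * R) :=
  List.map (fun y => (0%N, y / total_length)) S.

Lemma no_unit_cut S u v y :
  no_cut (unit_cuts S) u v -> List.In y S -> ~ (stretch u < y <= stretch v).
Proof.
move=> n hy [lo hi]; apply: (n (0%N, y / total_length)).
- exact: (in_map (fun y => (0%N, y / total_length))).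
- by rewrite unit_pcomp.
- rewrite /= (pcoord_stretch u) (pcoord_stretch v).
  by split; [apply: div_total_lt | apply: div_total_le].
Qed.

(* The cuts of the transported map: on every sheet, its start, its end and every cut of [C]. *)
Definition sheet_marks (C : seq (nat * R)) : seq R :=
  0 :: List.map snd C ++ List.map (comp_len D) (List.seq 0 (size (dcomps D))).

Definition sheet_cuts (C : seq (nat * R)) : seq R :=
  flat_map (fun m => List.map (Rplus (offset m)) (sheet_marks C)) (List.seq 0 nslots).

Lemma in_sheet_cuts C m t :
  (m < nslots)%N -> List.In t (sheet_marks C) -> List.In (offset m + t) (sheet_cuts C).
Proof.
move=> hm ht; apply/in_flat_map; exists m; split; last exact: in_map.
by apply/in_seq; move/ltP: hm; lia.
Qed.

Lemma embed_enter_sheet C u v :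
  no_cut (unit_cuts (sheet_cuts C)) u v -> stretch u <= stretch v ->
  (exists pa, embed pa = v) -> exists pa, embed pa = u.
Proof.
move=> n suv [[q a] vq]; rewrite -vq stretch_embed in n suv.
have lo : offset (slot (pcomp q) a) <= stretch u.
  case: (Rle_lt_dec (offset (slot (pcomp q) a)) (stretch u)) => // h.
  have /= [lo' _] := lift_range (q, a).
  have hcut := in_sheet_cuts (C := C) (slot_lt q a) (or_introl erefl).
  by elim: (no_unit_cut n hcut); rewrite stretch_embed; split; lra.
by have [p up] := embed_sheet_left (conj lo suv); exists (p, a).
Qed.

Lemma embed_stay_in_sheet C p a v :
  no_cut (unit_cuts (sheet_cuts C)) (embed (p, a)) v -> lift (p, a) <= stretch v ->
  exists q, embed (q, a) = v /\ pcomp q = pcomp p /\ pcoord p <= pcoord q /\ no_cut C p q.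
Proof.
move=> n suv; have hm := slot_lt p a.
have cut_free t : List.In t (sheet_marks C) ->
    ~ (lift (p, a) < offset (slot (pcomp p) a) + t <= stretch v).
  by move=> ht; rewrite -(stretch_embed (p, a)); apply: (no_unit_cut n); exact: in_sheet_cuts.
have hi : stretch v < offset (slot (pcomp p) a) + comp_len D (pcomp p).
  case: (Rlt_le_dec (stretch v) (offset (slot (pcomp p) a) + comp_len D (pcomp p))) => // h.
  have hL : List.In (comp_len D (pcomp p)) (sheet_marks C).
    right; apply/in_or_app; right; apply: in_map; apply/in_seq.
    by have := pcomp_lt p; move/ltP; lia.
  have [_ rp] := pcoord_range p.
  by elim: (cut_free _ hL); rewrite /lift /=; split; lra.
have [q [vq [cq dq]]] := embed_sheet_right suv hi.
exists q; split=> //; split=> //; split; first lra.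
move=> c hc _ [lo hi']; apply: (cut_free c.2).
- by right; apply/in_or_app; left; apply: in_map.
- by rewrite -vq stretch_embed /lift /= cq; split; lra.
Qed.

Lemma transport_embed_translation F :
  sheetwise_translation F -> piecewise_translation (transport embed F).
Proof.
move=> [C HF]; exists (unit_cuts (sheet_cuts C)) => u v _ luv n.
have suv := stretch_le luv.
split; first by rewrite !unit_pcomp.
case: (classic (exists pa, embed pa = u)) => [[[p a] up] | Hu]; last first.
  case: (classic (exists pa, embed pa = v)) => [Hv | Hv]; last by rewrite !transport_out.
  by case: Hu; apply: embed_enter_sheet n suv Hv.
move: n suv; rewrite -up stretch_embed => n suv.
have [q [<- [cq [lpq nC]]]] := embed_stay_in_sheet n suv.
have [e2 [e1 d1]] := HF p q (esym cq) lpq nC a.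
rewrite !(transportE embed_inj) !pcoord_embed -!Rdiv_minus_distr; congr Rdiv.
rewrite [F (q, a)]surjective_pairing [F (p, a)]surjective_pairing e2.
by rewrite !lift_sub.
Qed.

End Layout.

Section SkewProduct.

Variables (D : domain) (A : finZmodType).

Definition skew (f : point D -> A) (g : point D -> point D) (pa : point D * A) : point D * A :=
  (g pa.1, pa.2 + f (g pa.1))%R.

Lemma skew_comp f1 g1 h1 f2 g2 : cancel g1 h1 ->
  skew (fun p => f1 p + f2 (h1 p))%R (g1 \o g2) = skew f1 g1 \o skew f2 g2.
Proof.
move=> gK; apply: functional_extensionality => -[p a].
by rewrite /skew /= gK -addrA [(f2 _ + _)%R]addrC.
Qed.

Lemma skew_bij f g : bijective g -> bijective (skew f g).
Proof.
case=> h gK hK; exists (fun pa => (h pa.1, pa.2 - f pa.1)%R) => -[p a]; rewrite /skew /=.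
- by rewrite gK addrK.
- by rewrite hK subrK.
Qed.

Lemma skew_inj f1 g1 f2 g2 :
  bijective g1 -> skew f1 g1 = skew f2 g2 -> f1 = f2 /\ g1 = g2.
Proof.
move=> [h gK hK] e.
have eg : g1 = g2.
  by apply: functional_extensionality => x; exact: (f_equal (fun F => (F (x, 0%R)).1) e).
split=> //; apply: functional_extensionality => y.
by have := f_equal (fun F => (F (h y, 0%R)).2) e; rewrite /skew /= -eg hK !add0r.
Qed.

Lemma skew_sheetwise f g :
  piecewise_constant f -> piecewise_translation g -> bijective g ->
  sheetwise_translation (skew f g).
Proof.
move=> pf pg [h gK _].
have [cg Hg] := piecewise_translationP pg.
have [cf Hf] := piecewise_constant_comp pf pg gK.
exists (cg ++ cf) => p q e l n a.
have [e1 d1] := Hg p q e l (no_cut_catl n).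
by have /= -> := Hf p q e l (no_cut_catr n).
Qed.

End SkewProduct.

Theorem mainTheorem19 (D : domain) (G : (point D -> point D) -> Prop)
    (A : finZmodType) (J : point D -> bool) :
  is_subgroup_IET G -> subdomain J ->
  exists phi : (point D -> A) -> (point D -> point D) ->
               (point unit_interval -> point unit_interval),
    (forall f g, FJ G J f -> G g -> IET (phi f g)) /\
    (forall f1 g1 f2 g2, FJ G J f1 -> G g1 -> FJ G J f2 -> G g2 ->
        phi f1 g1 = phi f2 g2 -> f1 = f2 /\ g1 = g2) /\
    (forall f1 g1 h1 f2 g2, FJ G J f1 -> G g1 -> G h1 -> ginv g1 h1 ->
        FJ G J f2 -> G g2 ->
        phi (fun p => GRing.add (f1 p) (f2 (h1 p))) (g1 \o g2) = phi f1 g1 \o phi f2 g2).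
Proof.
move=> HG HJ.
have bij g : G g -> bijective g := fun Gg => (sg_IET HG Gg).1.
have E_inj := @embed_inj D A.
exists (fun f g => transport (@embed D A) (skew f g)); split; [|split].
- move=> f g Hf Gg; split; first exact/(transport_bij E_inj)/skew_bij/bij.
  apply/transport_embed_translation/skew_sheetwise; last exact: bij.
  + exact: FJ_piecewise_constant HG HJ Hf.
  + exact: (sg_IET HG Gg).2.
- move=> f1 g1 f2 g2 _ Gg1 _ _ /(transport_inj E_inj).
  exact: skew_inj (bij _ Gg1).
- move=> f1 g1 h1 f2 g2 _ _ _ [gK _] _ _.
  by rewrite (skew_comp _ _ _ gK) (transport_comp E_inj).
Qed.
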